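(* Let $C\in\mathbb{F}_p^n$, $C\ne0$, and $(d_1,\dots,d_n)\in\mathbb{F}_p^n$ satisfy $\sum_jM_jC_j=0$, $\Omega^M_jC=d_jC$ for $j=1,\dots,n-1$, and $d_n=0$. Then $\sum_{j=1}^nd_j=\sum_{j=1}^nM_j$ in $\mathbb{F}_p$.
   Context: $p$ is an odd prime, $n\ge2$, and $M_1,\dots,M_n$ are integers with $1\le M_i\le p-1$, viewed in $\mathbb{F}_p$. For $j\ne l$, $\Omega^M_{jl}$ is the $n\times n$ matrix over $\mathbb{F}_p$ with only nonzero entries $(\Omega^M_{jl})_{jj}=M_l$, $(\Omega^M_{jl})_{jl}=-M_l$, $(\Omega^M_{jl})_{lj}=-M_j$, $(\Omega^M_{jl})_{ll}=M_j$; $\Omega^M_j=\sum_{l=j+1}^n\Omega^M_{jl}$; $C$ is a column vector. *)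

From mathcomp Require Import all_boot all_order all_algebra.
Set Implicit Arguments. Unset Strict Implicit. Unset Printing Implicit Defensive.
Import GRing.Theory.
Local Open Scope ring_scope.

(* Indices 1..n of the paper are 'I_n = {0,..,n-1} here. *)

(* Omega^M_{jl}: only nonzero entries (j,j)=M_l, (j,l)=-M_l, (l,j)=-M_j, (l,l)=M_j
   (intended for j != l). *)
Definition OmegaJL (F : fieldType) (n : nat) (M : 'I_n -> F) (j l : 'I_n)
  : 'M[F]_n :=
  \matrix_(a < n, b < n)
    (if (a == j) && (b == j) then M l
     else if (a == j) && (b == l) then - M l
     else if (a == l) && (b == j) then - M j
     else if (a == l) && (b == l) then M j
     else 0).

Definition OmegaJ (F : fieldType) (n : nat) (M : 'I_n -> F) (j : 'I_n)
  : 'M[F]_n :=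
  \sum_(l < n | (j < l)%N) OmegaJL M j l.

(* Let k be the first index with C_k <> 0 and read the eigen-equations in row k.
   For j < k, row k of Omega_j C is M_j (C_k - C_j) = M_j C_k, so d_j = M_j; for
   j > k, row k of Omega_j C vanishes, so d_j = 0.  For j = k, the relation
   sum_l M_l C_l = 0 turns row k of Omega_k C into (M_k + sum_{l>k} M_l) C_k;
   when k is the last index the same relation forces M_k = 0 = d_k.  Hence the
   d_j add up to sum_{j<k} M_j + sum_{l>=k} M_l. *)

From mathcomp Require Import all_boot all_order all_algebra.
From mathcomp Require Import ring zify.
Set Implicit Arguments. Unset Strict Implicit. Unset Printing Implicit Defensive.
Import GRing.Theory.
Local Open Scope ring_scope.

Lemma sum_split_at (V : nmodType) (n : nat) (f : 'I_n -> V) (k : 'I_n) :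
  \sum_j f j =
    \sum_(j : 'I_n | (j < k)%N) f j + (f k + \sum_(j : 'I_n | (k < j)%N) f j).
Proof.
rewrite (bigID (fun j : 'I_n => (j < k)%N)) /= [X in _ + X](bigD1 k) ?ltnn //=.
congr (_ + (_ + _)); apply: eq_bigl => j.
by rewrite -leqNgt andbC eq_sym ltn_neqAle.
Qed.

Lemma cV_first_nonzero (R : nmodType) (n : nat) (C : 'cV[R]_n) :
  C != 0 ->
  exists2 k : 'I_n, C k 0 != 0 & forall j : 'I_n, (j < k)%N -> C j 0 = 0.
Proof.
move=> nzC; have [i Ci] : exists i : 'I_n, C i 0 != 0.
  apply/existsP; apply: contraR nzC; rewrite negb_exists => /forallP C0.
  by apply/eqP/matrixP => i j; rewrite (ord1 j) mxE; apply/eqP/negPn/C0.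
case: (@arg_minnP _ i (fun i => C i 0 != 0) (@nat_of_ord n) Ci) => k Ck k_min.
by exists k => // j; apply: contraTeq; rewrite -leqNgt; apply: k_min.
Qed.

Section OmegaRows.

Variables (F : fieldType) (n : nat) (Mf : 'I_n -> F) (C : 'cV[F]_n).

Lemma OmegaJL_mulmx (j l a : 'I_n) : j != l ->
  (OmegaJL Mf j l *m C) a 0 =
    if a == j then Mf l * (C j 0 - C l 0)
    else if a == l then Mf j * (C l 0 - C j 0) else 0.
Proof.
move=> jl; have lj : l != j by rewrite eq_sym.
rewrite mxE (bigD1 j) // (bigD1 l) //= big1 => [|b /andP[bj bl]].
  rewrite !mxE !eqxx (negbTE jl) (negbTE lj) !andbF !andbT /=.
  by case: (a == j); last case: (a == l); rewrite /=; ring.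
by rewrite !mxE (negbTE bj) (negbTE bl) !andbF mul0r.
Qed.

Lemma OmegaJ_mulmx_lt (j a : 'I_n) : (a < j)%N -> (OmegaJ Mf j *m C) a 0 = 0.
Proof.
move=> aj; rewrite /OmegaJ mulmx_suml summxE big1 // => l jl.
have [aNj aNl] : a != j /\ a != l by rewrite !neq_ltn aj (ltn_trans aj jl).
by rewrite OmegaJL_mulmx ?neq_ltn ?jl // (negbTE aNj) (negbTE aNl).
Qed.

Lemma OmegaJ_mulmx_gt (j a : 'I_n) : (j < a)%N ->
  (OmegaJ Mf j *m C) a 0 = Mf j * (C a 0 - C j 0).
Proof.
move=> ja; have [jNa aNj] : j != a /\ a != j by rewrite !neq_ltn ja orbT.
rewrite /OmegaJ mulmx_suml summxE (bigD1 a) //= big1 => [|l /andP[jl lNa]].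
  by rewrite addr0 OmegaJL_mulmx // (negbTE aNj) eqxx.
by rewrite OmegaJL_mulmx ?neq_ltn ?jl // (negbTE aNj) eq_sym (negbTE lNa).
Qed.

Lemma OmegaJ_mulmx_diag (j : 'I_n) :
  (OmegaJ Mf j *m C) j 0 = \sum_(l : 'I_n | (j < l)%N) Mf l * (C j 0 - C l 0).
Proof.
rewrite /OmegaJ mulmx_suml summxE; apply: eq_bigr => l jl.
by rewrite OmegaJL_mulmx ?eqxx // neq_ltn jl.
Qed.

End OmegaRows.

Section PivotEigenvalues.

Variables (F : fieldType) (n : nat) (Mf : 'I_n -> F) (C : 'cV[F]_n).
Variables (d : 'I_n -> F) (k : 'I_n).
Hypothesis Ck_neq0 : C k 0 != 0.
Hypothesis C_before_k : forall j : 'I_n, (j < k)%N -> C j 0 = 0.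
Hypothesis weighted_sum0 : \sum_j Mf j * C j 0 = 0.
Hypothesis OmegaJ_eigen :
  forall j : 'I_n, (j < n.-1)%N -> OmegaJ Mf j *m C = d j *: C.
Hypothesis d_last : forall j : 'I_n, (j : nat) = n.-1 -> d j = 0.

Lemma eigenvalue_row_k (j : 'I_n) : (j < n.-1)%N ->
  (OmegaJ Mf j *m C) k 0 = d j * C k 0.
Proof. by move=> /OmegaJ_eigen ->; rewrite mxE. Qed.

Lemma weighted_tail_sum :
  \sum_(l : 'I_n | (k < l)%N) Mf l * C l 0 = - (Mf k * C k 0).
Proof.
apply/eqP; rewrite -addr_eq0 addrC; apply/eqP.
move: weighted_sum0; rewrite (sum_split_at (fun j => Mf j * C j 0) k).
by rewrite big1 ?add0r // => j /C_before_k ->; rewrite mulr0.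
Qed.

Lemma eigenvalue_before_k (j : 'I_n) : (j < k)%N -> d j = Mf j.
Proof.
move=> jk; apply: (mulIf Ck_neq0).
rewrite -eigenvalue_row_k; last by have := ltn_ord k; lia.
by rewrite OmegaJ_mulmx_gt // (C_before_k jk) subr0.
Qed.

Lemma eigenvalue_after_k (j : 'I_n) : (k < j)%N -> d j = 0.
Proof.
move=> kj; have [jn|nj] := ltnP j n.-1; last first.
  by apply: d_last; have := ltn_ord j; lia.
apply/eqP; rewrite -(mulIr_eq0 _ (mulIf Ck_neq0)) -eigenvalue_row_k //.
by rewrite OmegaJ_mulmx_lt.
Qed.

Lemma eigenvalue_at_k : d k = Mf k + \sum_(l : 'I_n | (k < l)%N) Mf l.
Proof.
have [kn|nk] := ltnP k n.-1.
  apply: (mulIf Ck_neq0); rewrite -eigenvalue_row_k // OmegaJ_mulmx_diag.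
  under eq_bigr do rewrite mulrBr.
  by rewrite sumrB -mulr_suml weighted_tail_sum; ring.
have no_tail (f : 'I_n -> F) : \sum_(l : 'I_n | (k < l)%N) f l = 0.
  rewrite big_pred0 // => l; apply/negbTE; rewrite -leqNgt.
  by have := ltn_ord l; lia.
rewrite d_last; last by have := ltn_ord k; lia.
move: weighted_tail_sum; rewrite !no_tail.
by move/esym/eqP; rewrite oppr_eq0 mulf_eq0 (negbTE Ck_neq0) orbF addr0 => /eqP.
Qed.

Lemma sum_eigenvalues : \sum_j d j = \sum_j Mf j.
Proof.
rewrite (sum_split_at d k) (sum_split_at Mf k) eigenvalue_at_k.
rewrite (eq_bigr _ eigenvalue_before_k).
by rewrite [X in _ + (_ + X)]big1 ?addr0 // => j /eigenvalue_after_k.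
Qed.

End PivotEigenvalues.

Theorem corollary5p4 (p : nat) (hp : prime p) (hodd : odd p)
  (n : nat) (hn : (2 <= n)%N)
  (M : 'I_n -> nat) (hM : forall i, (1 <= M i <= p.-1)%N)
  (C : 'cV['F_p]_n) (hC : C != 0) (d : 'I_n -> 'F_p)
  (hsum : \sum_(j < n) (M j)%:R * C j ord0 = 0)
  (heig : forall j : 'I_n, (j < n.-1)%N ->
     OmegaJ (fun i => (M i)%:R : 'F_p) j *m C = d j *: C)
  (hdn : forall j : 'I_n, (j : nat) = n.-1 -> d j = 0) :
  \sum_(j < n) d j = \sum_(j < n) ((M j)%:R : 'F_p).
Proof.
have [k Ck C_before_k] := cV_first_nonzero hC.
exact: (sum_eigenvalues Ck C_before_k hsum heig hdn).
Qed.
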